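(* Let $R$ be any ring and let $x,y\in R$ satisfy $x^2=0$, $y^2=0$, $x\neq 0$, $y\neq 0$. If $x+y$ is nilpotent, then $xy$ is nilpotent.
   Context: Rings are associative and not necessarily unital. *)

From mathcomp Require Import all_boot all_algebra.
Set Implicit Arguments. Unset Strict Implicit. Unset Printing Implicit Defensive.
Local Open Scope ring_scope.

(* Rings in the paper are associative but NOT necessarily unital.  MathComp's
   ring structures all carry a unit, so we model a (possibly non-unital)
   associative ring as an additive abelian group [V : zmodType] together with
   a multiplication [mul] that is associative and distributes over addition
   on both sides. *)
Definition rng_axioms (V : zmodType) (mul : V -> V -> V) : Prop :=
  [/\ forall a b c, mul a (mul b c) = mul (mul a b) c,
      forall a b c, mul a (b + c) = mul a b + mul a c
    & forall a b c, mul (a + b) c = mul a c + mul b c].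

(* Positive powers without a unit: [rpow mul a n] = a^(n+1). *)
Fixpoint rpow (V : Type) (mul : V -> V -> V) (a : V) (n : nat) : V :=
  if n is m.+1 then mul (rpow mul a m) a else a.

Definition rnilpotent (V : zmodType) (mul : V -> V -> V) (a : V) : Prop :=
  exists k : nat, rpow mul a k = 0.

From mathcomp Require Import all_boot all_algebra.
Local Open Scope ring_scope.
Import GRing.Theory.

Set Implicit Arguments.
Unset Strict Implicit.

(* Since x^2 = y^2 = 0, (x+y)^2 = xy + yx, and the two summands annihilate
   each other, so (x+y)^(2m) = (xy)^m + (yx)^m.  If x+y is nilpotent this sum
   vanishes for large m; multiplying by x on the left and y on the right kills
   the (xy)^m term (x^2 = 0) and turns x(yx)^m y into (xy)^(m+1). *)

Section NonUnitalRing.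

Variables (V : zmodType) (mul : V -> V -> V).
Hypotheses (mulA : forall a b c, mul a (mul b c) = mul (mul a b) c)
           (mulDr : forall a b c, mul a (b + c) = mul a b + mul a c)
           (mulDl : forall a b c, mul (a + b) c = mul a c + mul b c).

Lemma rmulr0 (a : V) : mul a 0 = 0.
Proof. by apply: (addrI (mul a 0)); rewrite -mulDr !addr0. Qed.

Lemma rmul0r (a : V) : mul 0 a = 0.
Proof. by apply: (addrI (mul 0 a)); rewrite -mulDl !addr0. Qed.

Lemma rpowSl (a : V) (n : nat) : rpow mul a n.+1 = mul a (rpow mul a n).
Proof.
elim: n => [|n IHn] //.
by rewrite [RHS]/= mulA -IHn.
Qed.

Lemma rpow_eq0_leq (a : V) (k n : nat) :
  (k <= n)%N -> rpow mul a k = 0 -> rpow mul a n = 0.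
Proof.
move=> /subnK <-; elim: (n - k)%N => [|j IHj] // ak0.
by rewrite addSn /= IHj // rmul0r.
Qed.

Lemma rpow_sqr (a : V) (m : nat) :
  rpow mul a (2 * m).+1 = rpow mul (mul a a) m.
Proof.
elim: m => [|m IHm] //.
by rewrite mulnS /= -mulA -IHm.
Qed.

Lemma rpow_mul_annihilated (a b : V) (n : nat) :
  mul a b = 0 -> mul (rpow mul a n) b = 0.
Proof.
move=> ab0; case: n => [|n] //=.
by rewrite -mulA ab0 rmulr0.
Qed.

Lemma rpowD_annihilated (a b : V) (n : nat) :
  mul a b = 0 -> mul b a = 0 ->
  rpow mul (a + b) n = rpow mul a n + rpow mul b n.
Proof.
move=> ab0 ba0; elim: n => [|n IHn] //=.
by rewrite IHn mulDl !mulDr (rpow_mul_annihilated n ab0)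
  (rpow_mul_annihilated n ba0) addr0 add0r.
Qed.

Lemma mul_rpow_swap (x y : V) (n : nat) :
  mul x (rpow mul (mul y x) n) = mul (rpow mul (mul x y) n) x.
Proof.
elim: n => [|n IHn] /=; first exact: mulA.
by rewrite mulA IHn -!mulA.
Qed.

Lemma mul_rpow_sqr0 (x y : V) (n : nat) :
  mul x x = 0 -> mul x (rpow mul (mul x y) n) = 0.
Proof. by move=> xx0; case: n => [|n]; rewrite ?rpowSl !mulA xx0 !rmul0r. Qed.

Lemma rpow_sqr_add_sqr0 (x y : V) (m : nat) :
  mul x x = 0 -> mul y y = 0 ->
  rpow mul (x + y) (2 * m).+1 = rpow mul (mul x y) m + rpow mul (mul y x) m.
Proof.
move=> xx0 yy0; rewrite rpow_sqr -rpowD_annihilated.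
- by rewrite mulDl !mulDr xx0 yy0 add0r addr0.
- by rewrite mulA -(mulA x) yy0 rmulr0 rmul0r.
- by rewrite mulA -(mulA y) xx0 rmulr0 rmul0r.
Qed.

Lemma mul_rpow_sum_mul (x y : V) (m : nat) :
  mul x x = 0 ->
  mul (mul x (rpow mul (mul x y) m + rpow mul (mul y x) m)) y
    = rpow mul (mul x y) m.+1.
Proof.
by move=> xx0; rewrite mulDr mul_rpow_sqr0 // add0r mul_rpow_swap -mulA.
Qed.

End NonUnitalRing.

Theorem lemma2p1 (V : zmodType) (mul : V -> V -> V) (hR : rng_axioms mul)
  (x y : V) (hx2 : mul x x = 0) (hy2 : mul y y = 0) (hx : x <> 0) (hy : y <> 0) :
  rnilpotent mul (x + y) -> rnilpotent mul (mul x y).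
Proof.
case: hR => mulA mulDr mulDl [k sk0]; exists k.+1.
rewrite -(mul_rpow_sum_mul mulA mulDr) // -(rpow_sqr_add_sqr0 mulA mulDr mulDl) //.
rewrite (rpow_eq0_leq mulDl _ sk0) ?rmulr0 ?rmul0r //.
by rewrite leqW // leq_pmull.
Qed.
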